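(* In the standing setup, let $y\in K$ satisfy $0\le\langle x_{n+1}-y,\,x_n-x_{n+1}\rangle$ for all integers $n\ge1$. Then $y=0$.
   Context: Standing setup. $X$ is a real Hilbert space. $u\colon[0,\infty)\to X$ satisfies $\langle u(s),u(t)\rangle=\exp(-(s-t)^2)$ for all $s,t\ge0$. $(d_n)_{n\ge1}$ satisfies: $d_n>0$, $\sum_k d_k^2<\infty$, $t_n:=\sum_{k=1}^{n-1}d_k\to+\infty$, $d_1\le1/8$, $d_{n+1}\le d_n/(1+64d_n^2)$ for all $n$. $\rho_1:=1$, $\rho_{n+1}:=\rho_n\exp(-d_n^2)$, $x_n:=\rho_nu(t_n)$. $K$ denotes the smallest closed convex cone containing $\{x_n:n\ge1\}$, i.e. the closed convex hull of $\{\lambda x_n:\lambda\ge0,n\ge1\}$. *)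

From HB Require Import structures.
From mathcomp Require Import all_boot all_order all_algebra.
From mathcomp Require Import all_classical all_reals all_analysis.
Set Implicit Arguments. Unset Strict Implicit. Unset Printing Implicit Defensive.
Import Order.TTheory GRing.Theory Num.Theory.
Import numFieldNormedType.Exports.
Local Open Scope classical_set_scope.
Local Open Scope ring_scope.

(* A real Hilbert space is modelled as a complete normed space X over R
   together with an inner product [ip] (symmetric, linear in the first
   argument) whose induced norm is the norm of X. *)
Definition is_inner_product (R : realType) (X : normedModType R)
  (ip : X -> X -> R) : Prop :=
  [/\ (forall x y, ip x y = ip y x),
      (forall a x y z, ip (a *: x + y) z = a * ip x z + ip y z)
    & (forall x, ip x x = `|x| ^+ 2)].

Definition closed_convex_cone (R : realType) (X : normedModType R)
  (C : set X) : Prop :=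
  [/\ closed C,
      (forall x y (a : R), C x -> C y -> 0 <= a -> a <= 1 ->
          C (a *: x + (1 - a) *: y))
    & (forall x (l : R), C x -> 0 <= l -> C (l *: x))].

Definition cone_hull (R : realType) (X : normedModType R)
  (v : nat -> X) : set X :=
  \bigcap_(C in [set C : set X | closed_convex_cone C /\
                                 (forall n, (1 <= n)%N -> C (v n))]) C.

Definition tseq (R : realType) (d : nat -> R) (n : nat) : R :=
  \sum_(1 <= k < n) d k.

(* rho_1 = 1, rho_{n+1} = rho_n * exp(-d_n^2)  (rho_0 is irrelevant, set to 1) *)
Fixpoint rho (R : realType) (d : nat -> R) (n : nat) : R :=
  match n with
  | 0 => 1
  | m.+1 => if m is 0 then 1 else rho d m * expR (- (d m ^+ 2))
  end.

From HB Require Import structures.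
From mathcomp Require Import all_boot all_order all_algebra.
From mathcomp Require Import all_classical all_reals all_analysis.
From mathcomp Require Import ring lra.
Import Order.TTheory GRing.Theory Num.Theory.
Import numFieldNormedType.Exports.
Local Open Scope classical_set_scope.
Local Open Scope ring_scope.

(* Since t_n -> oo and <u(s), u(t)> = exp(-(s-t)^2), the x_n converge weakly
   to 0; the vectors z with <z, x_n> -> 0 form a closed convex cone, so every
   y in K satisfies <y, x_n> -> 0.  As <x_{n+1}, x_n - x_{n+1}> = 0, the
   hypothesis says exactly that <y, x_n> is nondecreasing, hence <y, x_n> <= 0
   for all n.  Then the closed convex cone {z | <y, z> <= 0} contains every
   x_n, hence K, hence y, and |y|^2 = <y, y> <= 0. *)

Definition ip_vanishing {R : realType} {X : normedModType R}
  (ip : X -> X -> R) (x : nat -> X) : set X :=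
  [set z | forall e, 0 < e -> exists N, forall n, (N <= n)%N -> `|ip z (x n)| <= e].

Lemma cone_hull_sub {R : realType} {X : normedModType R} (v : nat -> X)
    (C : set X) :
  closed_convex_cone C -> (forall n, (1 <= n)%N -> C (v n)) ->
  cone_hull v `<=` C.
Proof. by move=> Ccone Cv z; apply. Qed.

Lemma closure_approx {R : realType} {X : normedModType R} {A : set X} {z : X} {e : R} :
  closure A z -> 0 < e -> exists2 w, A w & `|z - w| < e.
Proof.
move=> Az e0; have [w [Aw zw]] := Az _ (nbhsx_ballx z _ e0).
by exists w => //; rewrite -ball_normE in zw.
Qed.

Lemma le0_nondecreasing_vanishing {R : realType} (a : nat -> R) m :
  (forall n, (m <= n)%N -> a n <= a n.+1) ->
  (forall e, 0 < e -> exists N, forall n, (N <= n)%N -> `|a n| <= e) ->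
  a m <= 0.
Proof.
move=> a_incr a_null; rewrite leNgt; apply/negP => am_gt0.
have am_le k : a m <= a (m + k)%N.
  elim: k => [|k IHk]; first by rewrite addn0.
  by apply: le_trans IHk _; rewrite addnS a_incr ?leq_addr.
have [N aN] := a_null _ (divr_gt0 am_gt0 (ltr0Sn R 1)).
have := aN (m + N)%N (leq_addl _ _); have := am_le N.
have := ler_norm (a (m + N)%N); lra.
Qed.

Section InnerProduct.
Context {R : realType} {X : normedModType R} {ip : X -> X -> R}.
Hypothesis hip : is_inner_product ip.

Lemma ipC x y : ip x y = ip y x. Proof. by case: hip. Qed.

Lemma ipxx x : ip x x = `|x| ^+ 2. Proof. by case: hip. Qed.

Lemma ipDl x y z : ip (x + y) z = ip x z + ip y z.
Proof. by have [_ ipDZ _] := hip; have := ipDZ 1 x y z; rewrite scale1r mul1r. Qed.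

Lemma ipZl a x z : ip (a *: x) z = a * ip x z.
Proof.
have [_ ipDZ _] := hip; have := ipDZ a x 0 z; rewrite addr0 => ->.
suff -> : ip 0 z = 0 by rewrite addr0.
by have := ipDl 0 0 z; rewrite addr0; lra.
Qed.

Lemma ipNl x z : ip (- x) z = - ip x z.
Proof. by rewrite -scaleN1r ipZl mulN1r. Qed.

Lemma ipBl x y z : ip (x - y) z = ip x z - ip y z.
Proof. by rewrite ipDl ipNl. Qed.

Lemma ipZr a x z : ip z (a *: x) = a * ip z x.
Proof. by rewrite ipC ipZl ipC. Qed.

Lemma ipDr x y z : ip z (x + y) = ip z x + ip z y.
Proof. by rewrite ipC ipDl !(ipC z). Qed.

Lemma ipBr x y z : ip z (x - y) = ip z x - ip z y.
Proof. by rewrite ipC ipBl !(ipC z). Qed.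

(* Cauchy-Schwarz, read off from |w + x|^2 <= (|w| + |x|)^2. *)
Lemma ip_le_norm w x : ip w x <= `|w| * `|x|.
Proof.
have := ipxx (w + x); rewrite ipDl !ipDr !ipxx (ipC x w).
have := ler_normD w x; have := normr_ge0 w; have := normr_ge0 x.
have := normr_ge0 (w + x); nra.
Qed.

Lemma normr_ip_le w x : `|ip w x| <= `|w| * `|x|.
Proof.
rewrite ler_norml ip_le_norm andbT.
by have := ip_le_norm (- w) x; rewrite ipNl normrN; lra.
Qed.

Lemma closed_convex_cone_ip_le0 w : closed_convex_cone [set z | ip w z <= 0].
Proof.
split=> [z wz_cl|z v a /= wz wv a0 a1|z l /= wz l0]; last first.
- by rewrite ipZr; nra.
- by rewrite ipDr !ipZr; nra.
rewrite /= leNgt; apply/negP => wz_gt0.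
have w1_gt0 : 0 < `|w| + 1 by have := normr_ge0 w; lra.
have [v /= wv zv] := closure_approx wz_cl (divr_gt0 wz_gt0 w1_gt0).
rewrite ltr_pdivlMr // in zv.
have := ip_le_norm w (z - v); rewrite ipBr.
have := normr_ge0 w; have := normr_ge0 (z - v); nra.
Qed.

Lemma closed_convex_cone_ip_vanishing (x : nat -> X) :
  (forall n, `|x n| <= 1) -> closed_convex_cone (ip_vanishing ip x).
Proof.
move=> x_le1; split.
- move=> z z_cl e e0; have e2_gt0 : 0 < e / 2 by rewrite divr_gt0.
  have [v vN zv] := closure_approx z_cl e2_gt0; have [N vNe] := vN _ e2_gt0.
  exists N => n /vNe vn; have := normr_ip_le (z - v) (x n).
  rewrite ipBl; have := ler_normD (ip v (x n)) (ip z (x n) - ip v (x n)).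
  rewrite addrC subrK; have := x_le1 n.
  have := normr_ge0 (z - v); have := normr_ge0 (x n); nra.
- move=> z v a zN vN a0 a1 e e0.
  have [N1 zN1] := zN _ e0; have [N2 vN2] := vN _ e0.
  exists (maxn N1 N2) => n; rewrite geq_max => /andP[/zN1 zn /vN2 vn].
  rewrite ipDl !ipZl; apply: le_trans (ler_normD _ _) _.
  have a1' : 0 <= 1 - a by rewrite subr_ge0.
  rewrite !normrM (ger0_norm a0) (ger0_norm a1').
  have := ler_wpM2l a0 zn; have := ler_wpM2l a1' vn; lra.
- move=> z l zN l0 e e0; have l1_gt0 : 0 < l + 1 by lra.
  have [N zNe] := zN _ (divr_gt0 e0 l1_gt0).
  exists N => n /zNe; rewrite ler_pdivlMr // ipZl normrM ger0_norm //.
  by have := normr_ge0 (ip z (x n)); nra.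
Qed.

End InnerProduct.

Section Weights.
Context {R : realType} (d : nat -> R).
Hypothesis d_gt0 : forall n, (1 <= n)%N -> 0 < d n.

Lemma tseq_ge0 n : 0 <= tseq d n.
Proof.
rewrite /tseq big_nat_cond; apply: sumr_ge0 => k /andP[/andP[k1 _] _].
exact/ltW/d_gt0.
Qed.

Lemma tseqS n : (1 <= n)%N -> tseq d n.+1 = tseq d n + d n.
Proof. by move=> n1; rewrite /tseq big_nat_recr. Qed.

Lemma rhoS n : (1 <= n)%N -> rho d n.+1 = rho d n * expR (- (d n ^+ 2)).
Proof. by case: n. Qed.

Lemma rho_ge0 n : 0 <= rho d n.
Proof.
elim: n => [|[|n] IHn] //=; rewrite mulr_ge0 ?expR_ge0 //.
Qed.

Lemma rho_le1 n : rho d n <= 1.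
Proof.
elim: n => [|[|n] IHn] //; rewrite rhoS //.
have : expR (- (d n.+1 ^+ 2)) <= 1 by rewrite -expR0 ler_expR oppr_le0 sqr_ge0.
have := rho_ge0 n.+1; have := expR_ge0 (- (d n.+1 ^+ 2)); nra.
Qed.

End Weights.

Section GaussianCurve.
Context {R : realType} {X : normedModType R} {ip : X -> X -> R}.
Hypothesis hip : is_inner_product ip.
Variables (u : R -> X) (d : nat -> R).
Hypothesis hu : forall s t : R, 0 <= s -> 0 <= t ->
  ip (u s) (u t) = expR (- ((s - t) ^+ 2)).
Hypothesis d_gt0 : forall n, (1 <= n)%N -> 0 < d n.

Local Notation x := (fun n => rho d n *: u (tseq d n)).

Lemma ip_x m n : ip (x m) (x n) =
  rho d m * rho d n * expR (- ((tseq d m - tseq d n) ^+ 2)).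
Proof. by rewrite /= (ipZl hip) (ipZr hip) hu ?tseq_ge0 //; ring. Qed.

Lemma norm_x_le1 n : `|x n| <= 1.
Proof.
have := ipxx hip (x n); rewrite ip_x subrr expr0n oppr0 expR0 mulr1.
have := rho_ge0 d n; have := rho_le1 d n; have := normr_ge0 (x n); nra.
Qed.

Lemma ip_x_step n : (1 <= n)%N -> ip (x n.+1) (x n - x n.+1) = 0.
Proof.
move=> n1; rewrite (ipBr hip) !ip_x subrr tseqS // addrAC subrr add0r.
by rewrite expr0n oppr0 expR0 rhoS //; ring.
Qed.

Lemma x_vanishing : tseq d @ \oo --> +oo -> forall m, ip_vanishing ip x (x m).
Proof.
move=> t_oo m e e0.
have [N _ tN] := (cvgryPge _).1 t_oo (tseq d m + 1 + `|ln e|).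
exists N => n /tN tn; rewrite ip_x.
have := ler_norm (- ln e); rewrite normrN => lne.
have hE : expR (- ((tseq d m - tseq d n) ^+ 2)) <= e.
  rewrite -[leRHS](@lnK _ e) ?posrE // ler_expR.
  have := normr_ge0 (ln e); nra.
rewrite ger0_norm ?mulr_ge0 ?rho_ge0 ?expR_ge0 //; apply: le_trans hE.
rewrite ler_piMl ?expR_ge0 //.
by rewrite mulr_ile1 ?rho_ge0 ?rho_le1.
Qed.

End GaussianCurve.

Theorem lemma6p4 (R : realType) (X : completeNormedModType R)
  (ip : X -> X -> R) (u : R -> X) (d : nat -> R) (y : X) :
  is_inner_product ip ->
  (forall s t : R, 0 <= s -> 0 <= t -> ip (u s) (u t) = expR (- ((s - t) ^+ 2))) ->
  (forall n, (1 <= n)%N -> 0 < d n) ->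
  cvg (series (fun k => d k.+1 ^+ 2) @ \oo) ->
  tseq d @ \oo --> +oo ->
  d 1%N <= 1 / 8 ->
  (forall n, (1 <= n)%N -> d n.+1 <= d n / (1 + 64 * d n ^+ 2)) ->
  cone_hull (fun n => rho d n *: u (tseq d n)) y ->
  (forall n, (1 <= n)%N ->
     0 <= ip (rho d n.+1 *: u (tseq d n.+1) - y)
             (rho d n *: u (tseq d n) - rho d n.+1 *: u (tseq d n.+1))) ->
  y = 0.
Proof.
move=> hip hu d_gt0 _ t_oo _ _ Ky obtuse.
set x := fun n => rho d n *: u (tseq d n).
have y_vanishing : ip_vanishing ip x y.
  apply: cone_hull_sub Ky => [|n _]; last exact: x_vanishing.
  exact/(closed_convex_cone_ip_vanishing hip)/(norm_x_le1 hip).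
have y_x_le0 n : (1 <= n)%N -> ip y (x n) <= 0.
  move=> n1; apply: le0_nondecreasing_vanishing y_vanishing => k nk.
  have k1 := leq_trans n1 nk; have := obtuse k k1.
  by rewrite (ipBl hip) (ip_x_step hip) // (ipBr hip); lra.
have : ip y y <= 0 by exact: cone_hull_sub (closed_convex_cone_ip_le0 hip y) _ _ Ky.
by rewrite (ipxx hip) => y2_le0; apply/normr0_eq0; have := normr_ge0 y; nra.
Qed.
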